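(* Let $\mathcal{L}$ be an ordered field with a convex valuation with value group $\Gamma$, and let $A\in {\operatorname{\mathsf{TPD}}}_n(\mathbb{S}_{\max}^{\vee})$. Then, there exists a $n\times n$ symmetric positive definite matrix ${\bf A}$ over $\mathcal{L}$ such that $\mathrm{sv}({\bf A})= A$.
   Context: $\Gamma$ is a divisible totally ordered abelian group and $\mathbb{S}_{\max}=\mathbb{S}_{\max}(\Gamma)$ the symmetrized tropical semiring, with zero $\mathbf{0}$, unit $\mathbf{1}$, minus $\ominus$; $\mathbb{S}_{\max}^\vee$ is the set of signed elements. $A\in{\operatorname{\mathsf{TPD}}}_n(\mathbb{S}_{\max}^\vee)$ means $A=(a_{ij})$ symmetric with signed entries, $\mathbf{0}<a_{ii}$ and $a_{ij}^2<a_{ii}a_{jj}$ for $i\ne j$ (where $a<b$ iff $b\ominus a$ is positive). For an ordered field $\mathcal{L}$ with a convex (surjective, non-Archimedean) valuation $\mathrm v:\mathcal{L}\to\Gamma\cup\{\bot\}$, the signed valuation is $\mathrm{sv}(b)=\mathrm{sgn}(b)\odot\mathrm v(b)$, where $\mathrm{sgn}(b)$ is $\mathbf{1}$, $\ominus\mathbf{1}$ or $\mathbf{0}$ according as $b>0$, $b<0$, $b=0$; it is applied entrywise. *)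

From HB Require Import structures.
From mathcomp Require Import all_boot all_order all_algebra.
Set Implicit Arguments. Unset Strict Implicit. Unset Printing Implicit Defensive.
Import Order.TTheory GRing.Theory Num.Theory.
Local Open Scope ring_scope.

Definition ordered_abelian_group (G : zmodType) (le : rel G) : Prop :=
  [/\ (forall a, le a a),
      (forall a b, le a b -> le b a -> a = b),
      (forall a b c, le a b -> le b c -> le a c),
      (forall a b, le a b || le b a)
    & (forall a b c, le a b -> le (a + c) (b + c))].

Definition divisible_group (G : zmodType) : Prop :=
  forall (g : G) (n : nat), (0 < n)%N -> exists h : G, h *+ n = g.

Definition divisible_ordered_abelian_group (G : zmodType) (le : rel G) : Prop :=
  ordered_abelian_group le /\ divisible_group G.

(* The symmetrized tropical (max-plus) semiring S_max(Gamma).         *)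
(* Elements: 0 (the zero, -oo), (+)a, (-)a, and balanced a^o,         *)
(* for a in Gamma.                                                    *)
Inductive smax (G : Type) : Type :=
| SZero : smax G
| SPos : G -> smax G
| SNeg : G -> smax G
| SBal : G -> smax G.
Arguments SZero {G}.

Section Smax.
Variables (G : zmodType) (le : rel G).

Definition smax_mod (x : smax G) : option G :=
  match x with SZero => None | SPos a | SNeg a | SBal a => Some a end.

Definition smax_add (x y : smax G) : smax G :=
  match smax_mod x, smax_mod y with
  | None, _ => y
  | _, None => x
  | Some a, Some b =>
      if le a b && le b a then
        match x, y with
        | SPos _, SPos _ => x
        | SNeg _, SNeg _ => x
        | _, _ => SBal a
        end
      else if le b a then x else y
  end.

Definition smax_opp (x : smax G) : smax G :=
  match x with SZero => SZero | SPos a => SNeg a | SNeg a => SPos a | SBal a => SBal a end.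

Definition smax_mul (x y : smax G) : smax G :=
  match x, y with
  | SZero, _ | _, SZero => SZero
  | SBal a, SPos b | SBal a, SNeg b | SBal a, SBal b
  | SPos a, SBal b | SNeg a, SBal b => SBal (a + b)
  | SPos a, SPos b | SNeg a, SNeg b => SPos (a + b)
  | SPos a, SNeg b | SNeg a, SPos b => SNeg (a + b)
  end.

Definition smax_one : smax G := SPos 0.

Definition smax_positive (x : smax G) : bool :=
  if x is SPos _ then true else false.

(* signed elements: S_max^vee = S_max^+ u S_max^- (including 0) *)
Definition smax_signed (x : smax G) : bool :=
  if x is SBal _ then false else true.

Definition smax_lt (a b : smax G) : bool :=
  smax_positive (smax_add b (smax_opp a)).

Definition TPD (n : nat) (A : 'M[smax G]_n) : Prop :=
  [/\ (forall i j, smax_signed (A i j)),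
      A^T = A,
      (forall i, smax_lt SZero (A i i))
    & (forall i j, i != j ->
         smax_lt (smax_mul (A i j) (A i j)) (smax_mul (A i i) (A j j)))].

End Smax.

(* Valuations on an ordered field L, in max-plus convention,          *)
(* with values in Gamma u {bot}  (bot represented by None).           *)
Section Valuation.
Variables (G : zmodType) (le : rel G) (L : realFieldType).

Definition vle (x y : option G) : bool :=
  match x, y with
  | None, _ => true
  | Some _, None => false
  | Some a, Some b => le a b
  end.

Definition vmul (x y : option G) : option G :=
  match x, y with Some a, Some b => Some (a + b) | _, _ => None end.

Definition valuation (v : L -> option G) : Prop :=
  [/\ (forall x, v x = None <-> x = 0),
      (forall x y, v (x * y) = vmul (v x) (v y)),
      (forall x y, vle (v (x + y)) (v x) || vle (v (x + y)) (v y))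
    & (forall g, exists x, v x = Some g)].

Definition convex_valuation (v : L -> option G) : Prop :=
  valuation v /\ (forall a b : L, 0 <= a -> a <= b -> vle (v a) (v b)).

Definition sv (v : L -> option G) (b : L) : smax G :=
  match v b with
  | None => SZero
  | Some g => smax_mul (if 0 < b then smax_one G else if b < 0 then smax_opp (smax_one G) else SZero)
                       (SPos g)
  end.

Definition sym_posdef (n : nat) (B : 'M[L]_n) : Prop :=
  B^T = B /\ (forall x : 'cV[L]_n, x != 0 -> 0 < (x^T *m B *m x) 0 0).

End Valuation.

From HB Require Import structures.
From mathcomp Require Import all_boot all_order all_algebra.
From mathcomp Require Import ring lra.
Set Implicit Arguments. Unset Strict Implicit. Unset Printing Implicit Defensive.
Import Order.TTheory GRing.Theory Num.Theory.
Local Open Scope ring_scope.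

(* Lift each signed entry (+)g, (-)g of A to +t_g, -t_g, where t_g > 0 has
   valuation g; this B is symmetric with sv B = A.  For i <> j the tropical
   condition 2 v(b_ij) < v(b_ii) + v(b_jj) and convexity of v give
   (2n b_ij)^2 <= b_ii b_jj, because multiplying by an integer never raises
   the valuation.  Off-diagonal entries that small make B positive definite:
   by the 2x2 case, x_i b_ij x_j >= -(p_i + p_j)/4n with p_i = b_ii x_i^2,
   and summing over all pairs bounds the quadratic form below by half of
   sum_i p_i. *)

Lemma binary_form_ge0 (L : realFieldType) (a b c x y : L) :
  0 < a -> b ^+ 2 <= a * c -> 0 <= a * x ^+ 2 + 2 * b * x * y + c * y ^+ 2.
Proof.
move=> a_gt0 disc_le0; rewrite -(pmulr_rge0 _ a_gt0).
have -> : a * (a * x ^+ 2 + 2 * b * x * y + c * y ^+ 2)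
    = (a * x + b * y) ^+ 2 + (a * c - b ^+ 2) * y ^+ 2 by ring.
by rewrite addr_ge0 ?sqr_ge0 // mulr_ge0 ?sqr_ge0 ?subr_ge0.
Qed.

Lemma quad_formE (R : comPzRingType) n (B : 'M[R]_n) (x : 'cV[R]_n) :
  (x^T *m B *m x) 0 0 = \sum_i \sum_j x i 0 * B i j * x j 0.
Proof.
rewrite mxE exchange_big; apply: eq_bigr => i _; rewrite mxE big_distrl /=.
by apply: eq_bigr => j _; rewrite !mxE.
Qed.

Lemma quad_form_gt0_of_small_offdiag (L : realFieldType) n (B : 'M[L]_n) :
  (forall i, 0 < B i i) ->
  (forall i j, i != j -> ((2 * n)%:R * B i j) ^+ 2 <= B i i * B j j) ->
  forall x : 'cV[L]_n, x != 0 -> 0 < (x^T *m B *m x) 0 0.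
Proof.
move=> diag_gt0 offdiag_small x x_neq0.
have [i0 xi0_neq0] : exists i, x i 0 != 0.
  apply/existsP; move: x_neq0; apply: contraR; rewrite negb_exists => /forallP x0.
  by apply/eqP/matrixP => i j; rewrite ord1 mxE; apply/eqP/negPn.
pose p i := B i i * x i 0 ^+ 2.
have p_ge0 i : 0 <= p i by rewrite mulr_ge0 ?sqr_ge0 ?ltW.
pose P := \sum_i p i.
have P_gt0 : 0 < P.
  rewrite /P (bigD1 i0) //= ltr_pwDl ?sumr_ge0 // mulr_gt0 //.
  by rewrite lt_def sqr_ge0 sqrf_eq0 xi0_neq0.
pose N : L := (4 * n)%:R.
have cross_ge i j : (if i == j then N * p i else 0)
    <= N * (x i 0 * B i j * x j 0) + p i + p j.
  case: eqP => [<-|/eqP neq_ij].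
    have -> : x i 0 * B i i * x i 0 = p i by rewrite /p; ring.
    by have := p_ge0 i; lra.
  have := binary_form_ge0 (x i 0) (x j 0) (diag_gt0 i) (offdiag_small i j neq_ij).
  by rewrite /p /N natrM; lra.
have : \sum_i \sum_j (if i == j then N * p i else 0)
    <= \sum_i \sum_j (N * (x i 0 * B i j * x j 0) + p i + p j).
  by apply: ler_sum => i _; apply: ler_sum => j _; exact: cross_ge.
have -> : \sum_i \sum_j (if i == j then N * p i else 0) = N * P.
  rewrite mulr_sumr; apply: eq_bigr => i _.
  by rewrite -big_mkcond (big_pred1 i) // => j; exact: eq_sym.
have -> : \sum_i \sum_j (N * (x i 0 * B i j * x j 0) + p i + p j)
    = N * (x^T *m B *m x) 0 0 + P *+ n *+ 2.
  under eq_bigr => i _ do rewrite !big_split /= sumr_const card_ord.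
  rewrite !big_split /= sumrMnl sumr_const card_ord quad_formE mulr_sumr.
  under [in RHS]eq_bigr => i _ do rewrite mulr_sumr.
  by rewrite -addrA mulr2n.
have n_pos : 0 < n%:R :> L by rewrite ltr0n (leq_ltn_trans (leq0n i0)).
rewrite /N -mulrnA -mulr_natr !natrM => bound.
have : 0 < n%:R * (4 * (x^T *m B *m x) 0 0) by nra.
by rewrite pmulr_rgt0 // pmulr_rgt0.
Qed.

Section SymmetrizedMaxPlus.
Variables (G : zmodType) (le : rel G).

Lemma smax_lt0x (x : smax G) : smax_lt le SZero x = smax_positive x.
Proof. by case: x. Qed.

Lemma smax_lt_sqr (x : smax G) (e g : G) :
  smax_mod x = Some g -> smax_lt le (smax_mul x x) (SPos e) -> ~~ le e (g + g).
Proof.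
by case: x => //= a [<-]; rewrite /smax_lt /smax_add /=; case: (le e _); case: (le _ e).
Qed.

End SymmetrizedMaxPlus.

Section OrderedGroup.
Variables (G : zmodType) (le : rel G).
Hypothesis le_ordered : ordered_abelian_group le.

Lemma double_eq0 (a : G) : a + a = 0 -> a = 0.
Proof.
case: le_ordered => _ le_anti _ le_total le_add a2_eq0.
case/orP: (le_total a 0) => [le_a0|le_0a]; apply: le_anti => //.
  by move: (le_add _ _ a le_a0); rewrite a2_eq0 add0r.
by move: (le_add _ _ a le_0a); rewrite a2_eq0 add0r.
Qed.

Lemma vle_refl : reflexive (vle le).
Proof. by case: le_ordered => le_refl _ _ _ _ [a|] //=. Qed.

Lemma vle_trans : transitive (vle le).
Proof. by case: le_ordered => _ _ le_trans' _ _ [b|] [a|] [c|] //=; apply: le_trans'. Qed.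

Lemma vle_mul (a b c d : option G) :
  vle le a b -> vle le c d -> vle le (vmul a c) (vmul b d).
Proof.
case: le_ordered => _ _ le_trans' _ le_add.
case: a b c d => [a|] [b|] [c|] [d|] //= le_ab le_cd.
apply: (le_trans' _ (b + c)); first exact: le_add.
by rewrite ![b + _]addrC; apply: le_add.
Qed.

Lemma vmul0l (a : option G) : vmul (Some 0) a = a.
Proof. by case: a => //= a; rewrite add0r. Qed.

Section Valuation.
Variables (L : realFieldType) (v : L -> option G).
Hypothesis v_valuation : valuation le v.

Lemma valuation_eq0 (x : L) : (v x == None) = (x == 0).
Proof. by case: v_valuation => v_eq0 _ _ _; apply/eqP/eqP => /v_eq0. Qed.

Lemma valuation0 : v 0 = None.
Proof. by apply/eqP; rewrite valuation_eq0. Qed.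

Lemma valuationM (x y : L) : v (x * y) = vmul (v x) (v y).
Proof. by case: v_valuation. Qed.

Lemma valuation1 : v 1 = Some 0.
Proof.
case E: (v 1) => [a|]; last by move/eqP: E; rewrite valuation_eq0 oner_eq0.
have := valuationM 1 1; rewrite mulr1 E => -[a_eq].
by congr Some; apply: (@addrI _ a); rewrite addr0.
Qed.

Lemma valuationN (x : L) : v (- x) = v x.
Proof.
have vN1 : v (-1) = Some 0.
  case E: (v (-1)) => [a|]; last by move/eqP: E; rewrite valuation_eq0 oppr_eq0 oner_eq0.
  have := valuationM (-1) (-1); rewrite mulrNN mulr1 valuation1 E => -[a2_eq0].
  by rewrite (double_eq0 (esym a2_eq0)).
by rewrite -mulN1r valuationM vN1; case: (v x) => //= a; rewrite add0r.
Qed.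

Lemma valuation_norm (x : L) : v `|x| = v x.
Proof. by case: (leP 0 x) => [/ger0_norm -> | /ltr0_norm ->]; rewrite ?valuationN. Qed.

Lemma valuation_nat_le (m : nat) : vle le (v m%:R) (Some 0).
Proof.
case: v_valuation => _ _ v_ultra _.
elim: m => [|m IHm]; first by rewrite valuation0.
rewrite -addn1 natrD; case/orP: (v_ultra m%:R 1) => [/vle_trans|]; first exact.
by rewrite valuation1.
Qed.

Lemma valuation_natM_le (m : nat) (x : L) : vle le (v (m%:R * x)) (v x).
Proof.
rewrite valuationM -{2}[v x]vmul0l.
by apply: vle_mul; [exact: valuation_nat_le | exact: vle_refl].
Qed.

Lemma valuation_surj (g : G) : exists x : L, v x == Some g.
Proof. by case: v_valuation => _ _ _ v_surj; have [x <-] := v_surj g; exists x. Qed.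

Definition vlift (g : G) : L := `|xchoose (valuation_surj g)|.

Lemma valuation_vlift (g : G) : v (vlift g) = Some g.
Proof. by rewrite valuation_norm; apply/eqP; exact: (xchooseP (valuation_surj g)). Qed.

Lemma vlift_gt0 (g : G) : 0 < vlift g.
Proof. by rewrite lt_def normr_ge0 andbT -valuation_eq0 valuation_vlift. Qed.

Definition lift_signed (a : smax G) : L :=
  match a with SPos g => vlift g | SNeg g => - vlift g | _ => 0 end.

Lemma lift_signed_gt0 (a : smax G) : smax_positive a -> 0 < lift_signed a.
Proof. by case: a => //= g _; exact: vlift_gt0. Qed.

Lemma valuation_lift_signed (a : smax G) :
  smax_signed a -> v (lift_signed a) = smax_mod a.
Proof. by case: a => //= [_|g _|g _]; rewrite ?valuation0 ?valuationN ?valuation_vlift. Qed.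

Lemma sv_lift_signed (a : smax G) : smax_signed a -> sv v (lift_signed a) = a.
Proof.
move=> a_signed; rewrite /sv valuation_lift_signed //.
case: a a_signed => //= g _; have g_gt0 := vlift_gt0 g.
  by rewrite g_gt0 /= add0r.
by rewrite oppr_gt0 ltNge (ltW g_gt0) /= oppr_lt0 g_gt0 /= add0r.
Qed.

Section Convex.
Hypothesis v_convex : forall a b : L, 0 <= a -> a <= b -> vle le (v a) (v b).

Lemma le_of_valuation_lt (y z : L) : 0 <= y -> ~~ vle le (v y) (v z) -> z <= y.
Proof. by move=> y_ge0; apply: contraR; rewrite -ltNge => /ltW; exact: v_convex. Qed.

Lemma natM_sqr_le (m : nat) (y b : L) (d g : G) :
  0 <= y -> v y = Some d -> v b = Some g -> ~~ le d (g + g) -> (m%:R * b) ^+ 2 <= y.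
Proof.
move=> y_ge0 vy vb d_gt; apply: le_of_valuation_lt => //.
apply: contra d_gt; rewrite vy expr2 valuationM => /vle_trans le_d.
apply: (le_d (Some (g + g))).
by rewrite -[Some (g + g)]/(vmul (Some g) (Some g)) -vb; apply: vle_mul; exact: valuation_natM_le.
Qed.

Lemma lift_signed_offdiag (m : nat) (a c x : smax G) :
  smax_positive a -> smax_positive c -> smax_signed x ->
  smax_lt le (smax_mul x x) (smax_mul a c) ->
  (m%:R * lift_signed x) ^+ 2 <= lift_signed a * lift_signed c.
Proof.
case: a c => // da [] // dc _ _ x_signed /=.
have ac_gt0 : 0 < vlift da * vlift dc by rewrite mulr_gt0 ?vlift_gt0.
case mod_x: (smax_mod x) => [g|] sqr_lt.
  apply: natM_sqr_le (ltW ac_gt0) _ _ (smax_lt_sqr mod_x sqr_lt).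
    by rewrite valuationM !valuation_vlift.
  by rewrite valuation_lift_signed.
by case: x x_signed mod_x sqr_lt => //= _ _ _; rewrite mulr0 expr0n ltW.
Qed.

End Convex.
End Valuation.
End OrderedGroup.

Theorem proposition6p2 (G : zmodType) (le : rel G)
    (HG : divisible_ordered_abelian_group le)
    (L : realFieldType) (v : L -> option G) (Hv : convex_valuation le v)
    (n : nat) (A : 'M[smax G]_n) (HA : TPD le A) :
  exists B : 'M[L]_n, sym_posdef B /\ map_mx (sv v) B = A.
Proof.
case: HG => le_ordered _; case: Hv => v_valuation v_convex.
case: HA => A_signed A_sym A_diag A_offdiag.
have A_diag_pos i : smax_positive (A i i) by rewrite -(smax_lt0x le).
exists (map_mx (lift_signed v_valuation) A); split; last first.
  by apply/matrixP => i j; rewrite !mxE sv_lift_signed.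
split; first by rewrite map_trmx A_sym.
apply: quad_form_gt0_of_small_offdiag => [i | i j neq_ij]; rewrite !mxE.
  exact: lift_signed_gt0.
exact: lift_signed_offdiag (A_offdiag i j neq_ij).
Qed.
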